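(* Let $\succ$ be a binary relation on $\mathcal{F}$ satisfying Axioms A1–A7 below, and define $\succsim$ on $X$ by $x\succsim y$ iff $y\not\succ x$. Let $f,g\in\mathcal{F}$ with $f(s)\succsim g(s)$ for all $s\in S$, and let $x\in X$. If $x\Join f$, then $g\not\succ x$; and if $x\Join g$, then $x\not\succ f$. Axioms: (A1) $\succ$ is asymmetric and transitive, and its restriction to $X$ is non-trivial and negatively transitive. (A2) For all $f,g,h\in\mathcal{F}$, $\{\alpha\in[0,1]:\alpha f+(1-\alpha)g\succ h\}$ and $\{\alpha\in[0,1]:h\succ\alpha f+(1-\alpha)g\}$ are open in $[0,1]$. (A3) For all $f,g\in\mathcal{F}$, $x\in X$, $\alpha\in(0,1)$: $f\succ g$ iff $\alpha f+(1-\alpha)x\succ\alpha g+(1-\alpha)x$. (A4) For all $x\in X$, $\{f:f\succ x\}$ and $\{f:x\succ f\}$ are convex. (A5) If $f(s)\succ g(s)$ for all $s\in S$ then $f\succ g$. (A6) If for all $x\in X$, $f\Join x$ implies $g\Join x$, then $f\Join g$. (A7) If $f\Join x$, $x\succ g$, $g\Join y$, $f\succ y$ (with $x,y\in X$), then $f\succ g$.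
   Context: $S$ is a set of states with algebra $\Sigma$; $X$ is a non-singleton convex subset of a real vector space; $\mathcal{F}$ is the set of simple acts $f:S\to X$ ($\Sigma$-measurable, finitely many values) with pointwise mixtures; elements of $X$ are identified with constant acts. $f\Join g$ means $f\not\succ g$ and $g\not\succ f$. *)

From HB Require Import structures.
From mathcomp Require Import all_boot all_order all_algebra.
From mathcomp Require Import boolp classical_sets cardinality reals.
Set Implicit Arguments. Unset Strict Implicit. Unset Printing Implicit Defensive.
Import Order.TTheory GRing.Theory Num.Theory.
Local Open Scope ring_scope.
Local Open Scope classical_set_scope.

Section Defs.
Context {R : realType} {V : lmodType R} {S : Type}.

Definition is_algebra (Sigma : set (set S)) : Prop :=
  Sigma set0 /\ (forall A, Sigma A -> Sigma (~` A)) /\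
  (forall A B, Sigma A -> Sigma B -> Sigma (A `|` B)).

Definition convex_set (X : set V) : Prop :=
  forall x y (a : R), X x -> X y -> 0 <= a <= 1 -> X (a *: x + (1 - a) *: y).

Definition is_act (Sigma : set (set S)) (X : set V) (f : S -> V) : Prop :=
  (forall s, X (f s)) /\ finite_set (range f) /\
  (forall v, Sigma (f @^-1` [set v])).

Definition cst (x : V) : S -> V := fun _ => x.

Definition mix (a : R) (f g : S -> V) : S -> V :=
  fun s => a *: f s + (1 - a) *: g s.

Definition incomp (P : (S -> V) -> (S -> V) -> Prop) (f g : S -> V) : Prop :=
  ~ P f g /\ ~ P g f.

Section Prefs.
Variables (Sigma : set (set S)) (X : set V) (P : (S -> V) -> (S -> V) -> Prop).
Let F := is_act Sigma X.

Definition A1 : Prop :=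
  (forall f g, F f -> F g -> P f g -> ~ P g f) /\
  (forall f g h, F f -> F g -> F h -> P f g -> P g h -> P f h) /\
  (exists x y, X x /\ X y /\ P (cst x) (cst y)) /\
  (forall x y z, X x -> X y -> X z -> P (cst x) (cst z) ->
     P (cst x) (cst y) \/ P (cst y) (cst z)).

Definition open01 (A : R -> Prop) : Prop :=
  forall a, 0 <= a <= 1 -> A a ->
    exists2 e : R, 0 < e & forall b, 0 <= b <= 1 -> `|b - a| < e -> A b.

Definition A2 : Prop :=
  forall f g h, F f -> F g -> F h ->
    open01 (fun a => P (mix a f g) h) /\ open01 (fun a => P h (mix a f g)).

Definition A3 : Prop :=
  forall f g x (a : R), F f -> F g -> X x -> 0 < a < 1 ->
    (P f g <-> P (mix a f (cst x)) (mix a g (cst x))).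

Definition A4 : Prop :=
  forall x, X x ->
    (forall f g (a : R), F f -> F g -> 0 <= a <= 1 ->
       P f (cst x) -> P g (cst x) -> P (mix a f g) (cst x)) /\
    (forall f g (a : R), F f -> F g -> 0 <= a <= 1 ->
       P (cst x) f -> P (cst x) g -> P (cst x) (mix a f g)).

Definition A5 : Prop :=
  forall f g, F f -> F g -> (forall s, P (cst (f s)) (cst (g s))) -> P f g.

Definition A6 : Prop :=
  forall f g, F f -> F g ->
    (forall x, X x -> incomp P f (cst x) -> incomp P g (cst x)) -> incomp P f g.

Definition A7 : Prop :=
  forall f g x y, F f -> F g -> X x -> X y ->
    incomp P f (cst x) -> P (cst x) g -> incomp P g (cst y) -> P f (cst y) ->
    P f g.

Definition prefs_ok : Prop := A1 /\ A2 /\ A3 /\ A4 /\ A5 /\ A6 /\ A7.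
End Prefs.
End Defs.

From HB Require Import structures.
From mathcomp Require Import all_boot all_order all_algebra.
From mathcomp Require Import boolp classical_sets cardinality reals.
From mathcomp Require Import lra.
Import Order.TTheory GRing.Theory Num.Theory.
Local Open Scope ring_scope.
Local Open Scope classical_set_scope.

(* Suppose g ≻ x, and let z be strictly below x.  By continuity (A2) the
   mixture a g + (1 - a) z is still above x for a close to 1.  Statewise,
   a f(s) + (1 - a) x ≻ a g(s) + (1 - a) z, because f(s) ≿ g(s) and x ≻ z
   (independence A3 and negative transitivity), so monotonicity (A5) and
   transitivity give a f + (1 - a) x ≻ x, and independence gives f ≻ x.
   If nothing is known to lie below x, mix f, g and x halfway with a constant
   above x first.  The second claim is the first one for the converse
   relation, which satisfies the same axioms. *)

Section Mixtures.
Context {R : realType} {V : lmodType R} {S : Type}.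

Lemma mix1 (f g : S -> V) : mix 1 f g = f.
Proof. by apply/funext => s; rewrite /mix subrr scale0r addr0 scale1r. Qed.

Lemma mixC (a : R) (f g : S -> V) : mix a f g = mix (1 - a) g f.
Proof. by apply/funext => s; rewrite /mix opprB addrC subrKC. Qed.

Lemma mix_cst (a : R) (x y : V) :
  mix a (cst x) (cst y) = cst (a *: x + (1 - a) *: y) :> (S -> V).
Proof. by []. Qed.

Lemma mix_cst_id (a : R) (x : V) : mix a (cst x) (cst x) = cst x :> (S -> V).
Proof. by rewrite mix_cst -scalerDl subrKC scale1r. Qed.

Context {Sigma : set (set S)} {X : set V}.

Lemma is_act_cst {x : V} : is_algebra Sigma -> X x -> is_act Sigma X (cst x).
Proof.
move=> [Sigma0 [SigmaC _]] Xx; split=> //; split; first exact: finite_image_cst.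
move=> v; have [<-|neq_xv] := pselect (x = v).
  suff -> : cst x @^-1` [set x] = ~` set0 :> set S by exact: SigmaC.
  by apply/seteqP; split=> s //= _ [].
suff -> : cst x @^-1` [set v] = set0 :> set S by [].
by apply/seteqP; split=> s.
Qed.

Lemma is_act_mix_cst {f : S -> V} {x : V} {a : R} :
  convex_set X -> is_act Sigma X f -> X x -> 0 < a <= 1 ->
  is_act Sigma X (mix a f (cst x)).
Proof.
move=> convX [Xf [fin_f meas_f]] Xx /andP[a_gt0 a_le1].
split; first by move=> s; apply: convX => //; rewrite ltW.
split.
  suff -> : range (mix a f (cst x)) = (fun v => a *: v + (1 - a) *: x) @` range f.
    exact: finite_image.
  apply/seteqP; split=> v /=.
    by move=> [s _ <-]; exists (f s) => //; exists s.
  by move=> [_ [s _ <-] <-]; exists s.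
move=> v; have a_neq0 : a != 0 by rewrite gt_eqF.
suff -> : mix a f (cst x) @^-1` [set v] = f @^-1` [set a^-1 *: (v - (1 - a) *: x)].
  exact: meas_f.
apply/seteqP; split=> s /=; rewrite /mix /cst.
  by move=> <-; rewrite addrK scalerA mulVf // scale1r.
by move=> ->; rewrite scalerA mulfV // scale1r subrK.
Qed.

End Mixtures.

Section Dominance.
Context {R : realType} {V : lmodType R} {S : Type}.
Context {Sigma : set (set S)} {X : set V} {P : (S -> V) -> (S -> V) -> Prop}.
Hypotheses (algS : is_algebra Sigma) (convX : convex_set X).
Hypotheses (hA1 : A1 Sigma X P) (hA2 : A2 Sigma X P) (hA3 : A3 Sigma X P).
Hypothesis hA5 : A5 Sigma X P.

Lemma mix_succ_near1 {g k h : S -> V} :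
  is_act Sigma X g -> is_act Sigma X k -> is_act Sigma X h ->
  P g h -> exists2 a : R, 0 < a < 1 & P (mix a g k) h.
Proof.
move=> Fg Fk Fh gh.
have [e e_gt0 near1] : exists2 e : R, 0 < e &
    forall b, 0 <= b <= 1 -> `|b - 1| < e -> P (mix b g k) h.
  by apply: (hA2 _ _ _ Fg Fk Fh).1; rewrite ?ler01 ?lexx ?mix1.
pose d := Order.min (e / 2) (1 / 2).
have d_gt0 : 0 < d by rewrite lt_min; apply/andP; split; lra.
have [d_le_e d_le_half] : d <= e / 2 /\ d <= 1 / 2 by apply/andP; rewrite -le_min.
exists (1 - d); first by apply/andP; split; lra.
apply: near1; first by apply/andP; split; lra.
have -> : 1 - d - 1 = - d by lra.
by rewrite normrN gtr0_norm //; lra.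
Qed.

Lemma cst_mix_succ {a b c d : V} {l : R} : X a -> X b -> X c -> X d ->
  ~ P (cst b) (cst a) -> P (cst c) (cst d) -> 0 < l < 1 ->
  P (cst (l *: a + (1 - l) *: c)) (cst (l *: b + (1 - l) *: d)).
Proof.
move=> Xa Xb Xc Xd not_ba cd l01.
have [_ [_ [_ negtrans]]] := hA1.
have l'01 : 0 < 1 - l < 1 by case/andP: l01 => *; apply/andP; split; lra.
have Xmix u v : X u -> X v -> X (l *: u + (1 - l) *: v).
  by move=> Xu Xv; apply: convX => //; case/andP: l01 => *; rewrite !ltW.
have ac_ad : P (cst (l *: a + (1 - l) *: c)) (cst (l *: a + (1 - l) *: d)).
  have := (hA3 _ _ _ _ (is_act_cst algS Xc) (is_act_cst algS Xd) Xa l'01).1 cd.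
  by rewrite -!mixC !mix_cst.
have not_bd_ad : ~ P (cst (l *: b + (1 - l) *: d)) (cst (l *: a + (1 - l) *: d)).
  by move/(hA3 _ _ _ _ (is_act_cst algS Xb) (is_act_cst algS Xa) Xd l01).2.
by have [|/not_bd_ad] := negtrans _ _ _ (Xmix _ _ Xa Xc) (Xmix _ _ Xb Xd)
  (Xmix _ _ Xa Xd) ac_ad.
Qed.

Lemma not_succ_dominated_of_lower {f g : S -> V} {x z : V} :
  is_act Sigma X f -> is_act Sigma X g -> X x -> X z -> P (cst x) (cst z) ->
  (forall s, ~ P (cst (g s)) (cst (f s))) -> ~ P f (cst x) -> ~ P g (cst x).
Proof.
move=> Ff Fg Xx Xz xz dom not_fx gx.
have [_ [trans _]] := hA1.
have [Fx Fz] := (is_act_cst algS Xx, is_act_cst algS Xz).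
have [l l01 glz_x] := mix_succ_near1 Fg Fz Fx gx.
have l01' : 0 < l <= 1 by case/andP: l01 => *; apply/andP; split; lra.
have Ffl := is_act_mix_cst convX Ff Xx l01'.
have Fgl := is_act_mix_cst convX Fg Xz l01'.
have flx_glz : P (mix l f (cst x)) (mix l g (cst z)).
  apply: hA5 _ _ Ffl Fgl _ => s.
  exact: cst_mix_succ (Ff.1 s) (Fg.1 s) Xx Xz (dom s) xz l01.
apply: not_fx; apply/(hA3 _ _ _ _ Ff Fx Xx l01).2.
by rewrite mix_cst_id; apply: trans Ffl Fgl Fx flx_glz glz_x.
Qed.

Lemma not_succ_dominated {f g : S -> V} {x : V} :
  is_act Sigma X f -> is_act Sigma X g -> X x ->
  (forall s, ~ P (cst (g s)) (cst (f s))) -> ~ P f (cst x) -> ~ P g (cst x).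
Proof.
move=> Ff Fg Xx dom not_fx gx.
have [_ [_ [[x1 [x2 [X1 [X2 x1x2]]]] negtrans]]] := hA1.
have [x1x|xx2] := negtrans _ _ _ X1 Xx X2 x1x2; last first.
  exact: not_succ_dominated_of_lower Ff Fg Xx X2 xx2 dom not_fx gx.
have [Fx F1] := (is_act_cst algS Xx, is_act_cst algS X1).
have h01 : 0 < (1 / 2 : R) < 1 by apply/andP; split; lra.
have h01' : 0 < (1 / 2 : R) <= 1 by apply/andP; split; lra.
have Xx' : X (1 / 2 *: x + (1 - 1 / 2) *: x1).
  by apply: convX => //; apply/andP; split; lra.
have x'x : P (cst (1 / 2 *: x + (1 - 1 / 2) *: x1)) (cst x).
  have := (hA3 _ _ _ _ F1 Fx Xx h01).1 x1x.
  rewrite mix_cst_id mix_cst; have -> : 1 - 1 / 2 = 1 / 2 :> R by lra.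
  by rewrite addrC.
apply: (not_succ_dominated_of_lower _ _ Xx' Xx x'x (f := mix (1 / 2) f (cst x1))).
- exact: is_act_mix_cst convX Ff X1 h01'.
- exact: is_act_mix_cst convX Fg X1 h01'.
- move=> s /(hA3 _ _ _ _ (is_act_cst algS (Fg.1 s)) (is_act_cst algS (Ff.1 s)) X1 h01).2.
  exact: dom.
- by move/(hA3 _ _ _ _ Ff Fx X1 h01).2.
- exact: (hA3 _ _ _ _ Fg Fx X1 h01).1 gx.
Qed.

End Dominance.

Section Converse.
Context {R : realType} {V : lmodType R} {S : Type}.
Context {Sigma : set (set S)} {X : set V}.

Definition converse (P : (S -> V) -> (S -> V) -> Prop) (f g : S -> V) := P g f.

Context {P : (S -> V) -> (S -> V) -> Prop}.

Lemma A1_converse : A1 Sigma X P -> A1 Sigma X (converse P).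
Proof.
move=> [asym [trans [[x [y [Xx [Xy xy]]]] negtrans]]]; split; [|split; [|split]].
- by move=> f g Ff Fg; apply: asym.
- by move=> f g h Ff Fg Fh fg gh; apply: trans gh fg.
- by exists y, x.
- move=> x' y' z' Xx' Xy' Xz' /(negtrans _ _ _ Xz' Xy' Xx').
  by rewrite /converse or_comm.
Qed.

Lemma A2_converse : A2 Sigma X P -> A2 Sigma X (converse P).
Proof.
by move=> hA2 F f g h Ff Fg Fh; have [up lo] := hA2 f g h Ff Fg Fh; split.
Qed.

Lemma A3_converse : A3 Sigma X P -> A3 Sigma X (converse P).
Proof. by move=> hA3 F f g x a Ff Fg Xx a01; apply: hA3. Qed.

Lemma A5_converse : A5 Sigma X P -> A5 Sigma X (converse P).
Proof. by move=> hA5 F f g Ff Fg; apply: hA5. Qed.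

End Converse.

Theorem lemma4 (R : realType) (V : lmodType R) (S : Type)
  (Sigma : set (set S)) (X : set V)
  (P : (S -> V) -> (S -> V) -> Prop) :
  is_algebra Sigma -> convex_set X ->
  (exists x y, X x /\ X y /\ x <> y) ->
  prefs_ok Sigma X P ->
  forall f g x, is_act Sigma X f -> is_act Sigma X g -> X x ->
  (* f(s) ≿ g(s) for all s, where x ≿ y iff ~ (y ≻ x) *)
  (forall s, ~ P (cst (g s)) (cst (f s))) ->
  (incomp P (cst x) f -> ~ P g (cst x)) /\
  (incomp P (cst x) g -> ~ P (cst x) f).
Proof.
move=> algS convX _ [hA1 [hA2 [hA3 [_ [hA5 _]]]]] f g x Ff Fg Xx dom.
split=> [[_ not_fx] | [not_xg _]].
  exact: (not_succ_dominated algS convX hA1 hA2 hA3 hA5 Ff Fg Xx dom not_fx).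
have := not_succ_dominated algS convX (A1_converse hA1) (A2_converse hA2)
  (A3_converse hA3) (A5_converse hA5) Fg Ff Xx.
by apply; [exact: dom | exact: not_xg].
Qed.
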